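(* Let $(\mathcal{A},\mathbf{m})$ be a multiarrangement in $\mathbb{Q}^l$ with $\mathcal{A}=\{H_1,\dots,H_n\}$, $H_i=\alpha_i^{-1}(0)$, where the $\alpha_i\in\mathbb{Z}[x_1,\dots,x_l]$ are linear forms such that no prime number divides any $\alpha_i$. If $(\mathcal{A},\mathbf{m})$ is free in $\mathbb{Q}^l$ with exponents $(e_1,\dots,e_l)$, then for every sufficiently large prime $p$, the multiarrangement $(\mathcal{A}_p,\mathbf{m})$ is free in $\mathbb{F}_p^l$ with exponents $(e_1,\dots,e_l)$.
   Context: Let $\mathbb{K}$ be a field and $S=\mathbb{K}[x_1,\dots,x_l]$. A multiarrangement $(\mathcal{A},\mathbf{m})$ in $\mathbb{K}^l$ is a finite set $\mathcal{A}=\{H_1,\dots,H_n\}$ of distinct linear hyperplanes $H_i=\alpha_i^{-1}(0)$ together with $\mathbf{m}\colon\mathcal{A}\to\mathbb{Z}_{\ge0}$; $Q(\mathcal{A},\mathbf{m})=\prod_i\alpha_i^{\mathbf{m}(H_i)}$. $D(\mathcal{A},\mathbf{m})=\{\delta=\sum_j f_j\partial_{x_j}: f_j\in S,\ \delta(\alpha_i)\in\alpha_i^{\mathbf{m}(H_i)}S\ \forall i\}$. $(\mathcal{A},\mathbf{m})$ is free with exponents $(e_1,\dots,e_l)$ if $D(\mathcal{A},\mathbf{m})$ is a free $S$-module with a basis of homogeneous derivations (all coefficients homogeneous of the same degree) of polynomial degrees $e_1,\dots,e_l$. For a prime $p$, $\pi_p$ is reduction mod $p$ on $\mathbb{Z}[x_1,\dots,x_l]$;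 $p$ is good if $\pi_p(\alpha_i)\neq\pi_p(\alpha_j)$ for $i\ne j$ (all but finitely many primes are good). For good $p$, $(\mathcal{A}_p,\mathbf{m})$ is the multiarrangement in $\mathbb{F}_p^l$ with hyperplanes $\pi_p(\alpha_i)^{-1}(0)$ of multiplicity $\mathbf{m}(H_i)$. *)

From HB Require Import structures.
From mathcomp Require Import all_boot all_order all_algebra.
From mathcomp Require Import mpoly.
Set Implicit Arguments. Unset Strict Implicit. Unset Printing Implicit Defensive.
Import GRing.Theory.
Local Open Scope ring_scope.

(* A linear form alpha = sum_j a_j x_j in K[x_1..x_l] is given by its
   coefficient vector a : 'I_l -> K.  A multiarrangement with n hyperplanes
   is a family a : 'I_n -> 'I_l -> K of linear forms plus m : 'I_n -> nat. *)

Section MultiArr.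
Variables (K : fieldType) (l n : nat).

Definition lform (a : 'I_l -> K) : {mpoly K[l]} := \sum_(j < l) a j *: 'X_j.

(* a derivation sum_j f_j d/dx_j, given by its coefficients f_j *)
Definition deriv := 'I_l -> {mpoly K[l]}.

Definition dapply (d : deriv) (a : 'I_l -> K) : {mpoly K[l]} :=
  \sum_(j < l) a j *: d j.

Definition in_D (a : 'I_n -> 'I_l -> K) (m : 'I_n -> nat) (d : deriv) : Prop :=
  forall i, exists q : {mpoly K[l]}, dapply d (a i) = lform (a i) ^+ m i * q.

(* p is homogeneous of (total) degree e (the zero polynomial is homogeneous
   of every degree) *)
Definition homogeneous (e : nat) (p : {mpoly K[l]}) : Prop :=
  forall mo, mo \in msupp p -> mdeg mo = e.

Definition free_with_exponents (a : 'I_n -> 'I_l -> K) (m : 'I_n -> nat)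
    (e : 'I_l -> nat) : Prop :=
  exists theta : 'I_l -> deriv,
    [/\ forall k, in_D a m (theta k),
        forall k j, homogeneous (e k) (theta k j),
        forall d, in_D a m d ->
          exists g : 'I_l -> {mpoly K[l]},
            forall j, d j = \sum_(k < l) g k * theta k j
      & forall g : 'I_l -> {mpoly K[l]},
          (forall j, \sum_(k < l) g k * theta k j = 0) -> forall k, g k = 0].

Definition distinct_hyperplanes (a : 'I_n -> 'I_l -> K) : Prop :=
  (forall i, exists j, a i j != 0) /\
  (forall i i', i != i' -> forall c : K, ~ (forall j, a i j = c * a i' j)).

End MultiArr.

(* integral forms viewed over a field K (for K = 'F_p this is reduction mod p) *)
Definition forms_in (K : fieldType) l n (alpha : 'I_n -> 'I_l -> int) :
  'I_n -> 'I_l -> K := fun i j => (alpha i j)%:~R.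

From Pilot Require Import Defs.
From mathcomp Require Import all_boot all_order all_algebra.
From mathcomp Require Import mpoly.
From mathcomp Require Import ring.
Set Implicit Arguments. Unset Strict Implicit. Unset Printing Implicit Defensive.
Import GRing.Theory.
Local Open Scope ring_scope.

(* Saito's criterion holds over every field: derivations theta_1, ..., theta_l
   in D(A, m) form a basis if and only if det (theta_k(x_j)) is a unit multiple
   of the defining polynomial Q(A, m).  Over Q, a basis, the quotients
   witnessing theta_k \in D(A, m), and the unit of the criterion together with
   its inverse involve finitely many rationals; after multiplication by a
   common denominator N all these identities hold over Z.  For p > N they reduce
   to identities over F_p in which the unit remains a unit, and for p larger
   than every 2 x 2 minor of the alpha_i the reduced hyperplanes stay distinct,
   so Saito's criterion over F_p yields a basis.  Reduction only deletes
   monomials, so the exponents are preserved. *)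

Section LinearForms.
Variables (K : fieldType) (l : nat).
Local Notation P := {mpoly K[l]}.

Definition mdvd (x y : P) := exists r, y = x * r.

Lemma mcoeff_lform (a : 'I_l -> K) j : (lform a)@_U_(j) = a j.
Proof.
rewrite /lform raddf_sum (bigD1 j) //= big1 => [|i /negbTE ne].
  by rewrite mcoeffZ mcoeffXU eqxx mulr1 addr0.
by rewrite mcoeffZ mcoeffXU ne mulr0.
Qed.

Lemma lform_eq0 (a : 'I_l -> K) : lform a = 0 -> forall j, a j = 0.
Proof. by move=> a0 j; rewrite -mcoeff_lform a0 mcoeff0. Qed.

Lemma lform_neq0 (a : 'I_l -> K) j : a j != 0 -> lform a != 0.
Proof. by apply: contraNneq => /lform_eq0 ->. Qed.

Lemma lformB (b c : 'I_l -> K) (x : K) :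
  lform b - x *: lform c = lform (fun j => b j - x * c j).
Proof.
rewrite /lform scaler_sumr -sumrB; apply: eq_bigr => j _.
by rewrite scalerA scalerBl.
Qed.

Lemma dapplyMl (c : P) (d : Defs.deriv K l) b :
  dapply (fun j => c * d j) b = c * dapply d b.
Proof. by rewrite /dapply mulr_sumr; apply: eq_bigr => j _; rewrite scalerAr. Qed.

Section HyperplaneRestriction.
Variables (a : 'I_l -> K) (j0 : 'I_l).

(* [p \mPo hyp_proj] is [p] composed with the projection of [K^l] onto
   [ker a] along the [j0]-th axis; its kernel is the ideal generated by
   [lform a]. *)
Definition hyp_proj : l.-tuple P :=
  [tuple 'X_i - (i == j0)%:R *: ((a j0)^-1 *: lform a) | i < l].
Local Notation hrestr := (comp_mpoly hyp_proj).

Lemma hrestrX i : hrestr 'X_i = 'X_i - (i == j0)%:R *: ((a j0)^-1 *: lform a).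
Proof. by rewrite comp_mpolyXU -tnth_nth tnth_mktuple. Qed.

Lemma hrestrC c : hrestr c%:MP = c%:MP.
Proof. exact: comp_mpolyC. Qed.

Lemma hrestr_lform b : hrestr (lform b) = lform b - (b j0 / a j0) *: lform a.
Proof.
have -> : hrestr (lform b) = \sum_j b j *: hrestr 'X_j.
  by rewrite rmorph_sum; apply: eq_bigr => j _; exact: comp_mpolyZ.
under eq_bigr => j _ do rewrite hrestrX scalerBr.
rewrite sumrB; congr (_ - _).
rewrite (bigD1 j0) //= big1 => [|j /negbTE ->]; last by rewrite scale0r scaler0.
by rewrite eqxx scale1r addr0 scalerA.
Qed.

Lemma hrestr_lform_id : a j0 != 0 -> hrestr (lform a) = 0.
Proof. by move=> a_j0; rewrite hrestr_lform mulfV // scale1r subrr. Qed.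

Lemma lform_dvd_sub_hrestr g : mdvd (lform a) (g - hrestr g).
Proof.
pose good u := mdvd (lform a) (u - hrestr u).
have goodD u v : good u -> good v -> good (u + v).
  move=> [r1 e1] [r2 e2]; exists (r1 + r2).
  by rewrite rmorphD mulrDr -e1 -e2 opprD addrACA.
have goodM u v : good u -> good v -> good (u * v).
  move=> [r1 e1] [r2 e2]; exists (u * r2 + r1 * hrestr v).
  by rewrite rmorphM mulrDr mulrCA -e2 mulrA -e1 mulrBr mulrBl addrA subrK.
have goodC c : good c%:MP by exists 0; rewrite hrestrC subrr mulr0.
have goodX i : good 'X_i.
  exists ((i == j0)%:R * (a j0)^-1)%:MP.
  by rewrite hrestrX opprB addrC subrK scalerA [RHS]mulrC mul_mpolyC.
have goodXm mo : good 'X_[mo].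
  rewrite mpolyXE_id; apply: (big_ind good) => // [|i _]; first exact: (goodC 1).
  by elim: (mo i) => [|k IHk]; [exact: (goodC 1) | rewrite exprS; apply: goodM].
elim/mpolyind: g => [|c mo p _ _ IH]; first exact: (goodC 0).
by rewrite -mul_mpolyC; apply: goodD => //; apply: goodM.
Qed.

Lemma lform_dvd_hrestr_eq0 g : hrestr g = 0 -> mdvd (lform a) g.
Proof. by move=> g0; have := lform_dvd_sub_hrestr g; rewrite g0 subr0. Qed.

(* Since [hrestr] is a ring morphism into a domain killing [lform a], a factor
   [f] with [hrestr f != 0] is coprime to [lform a]. *)
Lemma lformX_dvd_cancel f g k : a j0 != 0 -> hrestr f != 0 ->
  mdvd (lform a ^+ k) (f * g) -> mdvd (lform a ^+ k) g.
Proof.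
move=> a_j0 hf_neq0; have a_neq0 := lform_neq0 a_j0.
elim: k g => [|k IHk] g; first by exists g; rewrite expr0 mul1r.
move=> [r fg_eq].
have /lform_dvd_hrestr_eq0 [g1 g_eq] : hrestr g = 0.
  have : hrestr (f * g) = 0.
    by rewrite fg_eq rmorphM rmorphXn /= hrestr_lform_id // expr0n mul0r.
  by rewrite rmorphM => /eqP; rewrite mulf_eq0 (negbTE hf_neq0) => /eqP.
have [|r1 g1_eq] := IHk g1; last by exists r1; rewrite g_eq g1_eq exprS mulrA.
by exists r; apply: (mulfI a_neq0); rewrite mulrCA -g_eq fg_eq exprS mulrA.
Qed.

End HyperplaneRestriction.

Definition spans_D n (a : 'I_n -> 'I_l -> K) (m : 'I_n -> nat)
    (th : 'I_l -> Defs.deriv K l) :=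
  forall d, in_D a m d -> exists g : 'I_l -> P, forall j, d j = \sum_(k < l) g k * th k j.

Definition lin_indep (th : 'I_l -> Defs.deriv K l) :=
  forall g : 'I_l -> P, (forall j, \sum_(k < l) g k * th k j = 0) -> forall k, g k = 0.

Definition coef_mx (th : 'I_l -> Defs.deriv K l) : 'M[P]_l := \matrix_(k, j) th k j.

Lemma lin_indep_det th : \det (coef_mx th) != 0 -> lin_indep th.
Proof.
move=> det_neq0 g g_th k.
have g0 : \row_k g k *m coef_mx th = 0.
  by apply/rowP => j; rewrite !mxE -[RHS](g_th j); apply: eq_bigr => k' _; rewrite !mxE.
have := congr1 (mulmx^~ (\adj (coef_mx th))) g0.
rewrite mul0mx -mulmxA mul_mx_adj mul_mx_scalar => /rowP /(_ k) /eqP.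
by rewrite !mxE mulf_eq0 (negbTE det_neq0) => /eqP.
Qed.

Lemma det_coef_mx_set_row th (d : Defs.deriv K l) k :
  \det (coef_mx (fun r => if r == k then d else th r)) =
  (\row_j d j *m \adj (coef_mx th)) 0 k.
Proof.
rewrite (expand_det_row _ k) mxE; apply: eq_bigr => j _.
rewrite !mxE eqxx /cofactor; congr (_ * (_ * \det _)).
by apply/matrixP => r c; rewrite !mxE eq_sym (negbTE (neq_lift k r)).
Qed.

Lemma det_id_col_set (v : 'I_l -> P) (j1 : 'I_l) :
  (forall j : 'I_l, (j < j1)%N -> v j = 0) ->
  \det (\matrix_(j, j') (if j' == j1 then v j else (j == j')%:R) : 'M[P]_l) = v j1.
Proof.
move=> v_lt; rewrite det_trig; last first.
  apply/is_trig_mxP => j j' lt_jj'; rewrite mxE.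
  have [j'_eq|_] := eqVneq j' j1; first by rewrite v_lt // -j'_eq.
  by rewrite -(inj_eq val_inj) /= ltn_eqF.
rewrite (bigD1 j1) //= mxE eqxx big1 ?mulr1 // => j /negbTE j_neq.
by rewrite mxE j_neq eqxx.
Qed.

Lemma exists_pivot (b : 'I_l -> K) j1 : b j1 != 0 ->
  exists j0, b j0 != 0 /\ forall j : 'I_l, (j < j0)%N -> b j = 0.
Proof.
move=> b_j1; case: (@arg_minnP _ j1 (fun j => b j != 0) val b_j1) => j0 b_j0 min_j0.
exists j0; split => // j; apply: contraTeq => b_j; rewrite -leqNgt; exact: min_j0.
Qed.

Section Arrangement.
Variables (n : nat) (a : 'I_n -> 'I_l -> K) (m : 'I_n -> nat) (j0 : 'I_n -> 'I_l).
Hypothesis a_j0 : forall i, a i (j0 i) != 0.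
(* [j0 i] is the first nonzero coordinate of [a i], so that the matrices
   fed to [det_id_col_set] are triangular. *)
Hypothesis a_lt_j0 : forall i (j : 'I_l), (j < j0 i)%N -> a i j = 0.
Hypothesis a_nonprop : forall i i', i != i' -> forall c : K, ~ (forall j, a i j = c * a i' j).

Local Notation lf i := (lform (a i)).
Local Notation hrestr i := (comp_mpoly (hyp_proj (a i) (j0 i))).

Definition defpoly := \prod_(i < n) lf i ^+ m i.

Lemma lf_neq0 i : lf i != 0.
Proof. exact: lform_neq0 (a_j0 i). Qed.

Lemma hrestr_lf_neq0 i i' : i' != i -> hrestr i (lf i') != 0.
Proof.
move=> ne; rewrite hrestr_lform lformB; apply/eqP => /lform_eq0 eq0.
apply: (a_nonprop ne (c := a i' (j0 i) / a i (j0 i))) => j.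
by apply/eqP; rewrite -subr_eq0 eq0.
Qed.

Lemma defpoly_neq0 : defpoly != 0.
Proof. by apply/prodf_neq0 => i _; rewrite expf_neq0 // lf_neq0. Qed.

Lemma hrestr_prod_neq0 i (r : seq 'I_n) (q : pred 'I_n) (k : 'I_n -> nat) :
  (forall i', i' \in r -> q i' -> i' != i) ->
  hrestr i (\prod_(i' <- r | q i') lf i' ^+ k i') != 0.
Proof.
move=> r_i; rewrite rmorph_prod prodf_seq_neq0; apply/allP => i' i'_r /=.
by apply/implyP => q_i'; rewrite rmorphXn expf_neq0 // hrestr_lf_neq0 // r_i.
Qed.

Lemma prod_lformX_dvd (r : seq 'I_n) h : uniq r ->
  (forall i, i \in r -> mdvd (lf i ^+ m i) h) ->
  mdvd (\prod_(i <- r) lf i ^+ m i) h.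
Proof.
elim: r h => [|i r IHr] h /=; first by exists h; rewrite big_nil mul1r.
move=> /andP [i_notin_r r_uniq] dvd_h.
have [|u h_eq] := IHr h r_uniq; first by move=> i' i'_r; apply: dvd_h; rewrite inE i'_r orbT.
have hrestr_neq0 : hrestr i (\prod_(i' <- r) lf i' ^+ m i') != 0.
  by apply: hrestr_prod_neq0 => i' i'_r _; apply: contraNneq i_notin_r => <-.
have /(lformX_dvd_cancel (a_j0 i) hrestr_neq0) [v u_eq] :
    mdvd (lf i ^+ m i) ((\prod_(i' <- r) lf i' ^+ m i') * u).
  by rewrite -h_eq; apply: dvd_h; rewrite inE eqxx.
by exists v; rewrite big_cons h_eq u_eq mulrCA mulrA.
Qed.

Lemma unit_of_mul_eq_prod (r : seq 'I_n) (k : 'I_n -> nat) h v :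
  (forall i, i \in r -> hrestr i h != 0) ->
  h * v = \prod_(i <- r) lf i ^+ k i -> h \is a GRing.unit.
Proof.
elim: r v => [|i r IHr] v hrestr_h; first by rewrite big_nil => hv1; apply/unitrPr; exists v.
rewrite big_cons => hv_eq.
have /(lformX_dvd_cancel (a_j0 i) (hrestr_h i (mem_head _ _))) [v' v_eq] :
  mdvd (lf i ^+ k i) (h * v) by rewrite hv_eq; eexists.
apply: (IHr v') => [i' i'_r|]; first by apply: hrestr_h; rewrite inE i'_r orbT.
apply: (mulfI (expf_neq0 (k i) (lf_neq0 i))).
by rewrite -hv_eq v_eq mulrCA.
Qed.

(* Replacing column [j0 i] of the coefficient matrix by the values
   [theta_k(alpha_i)], which are multiples of [alpha_i ^ m_i], multiplies the
   determinant by [a i (j0 i)]. *)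
Lemma lformX_dvd_det th i : (forall k, in_D a m (th k)) ->
  mdvd (lf i ^+ m i) (\det (coef_mx th)).
Proof.
move=> th_D; have [q q_eq] := fin_all_exists (fun k => th_D k i).
pose E : 'M[P]_l := \matrix_(j, j') (if j' == j0 i then (a i j)%:MP else (j == j')%:R).
pose N : 'M[P]_l := \matrix_(k, j') (if j' == j0 i then q k else th k j').
pose D : 'rV[P]_l := \row_j' (if j' == j0 i then lf i ^+ m i else 1).
have E_eq : coef_mx th *m E = N *m diag_mx D.
  apply/matrixP => k j'; rewrite mul_mx_diag !mxE.
  have [->|ne] := eqVneq j' (j0 i).
    rewrite mulrC -q_eq /dapply; apply: eq_bigr => j _.
    by rewrite !mxE eqxx mulrC mul_mpolyC.
  rewrite mulr1 (bigD1 j') //= big1 => [|j /negbTE j_neq]; last first.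
    by rewrite !mxE (negbTE ne) j_neq mulr0.
  by rewrite !mxE (negbTE ne) eqxx mulr1 addr0.
have det_E : \det E = (a i (j0 i))%:MP.
  by apply: det_id_col_set => j lt_j; rewrite a_lt_j0 ?mpolyC0.
have det_D : \prod_j D 0 j = lf i ^+ m i.
  by rewrite (bigD1 (j0 i)) //= mxE eqxx big1 ?mulr1 // => j /negbTE j_neq; rewrite mxE j_neq.
exists (\det N * ((a i (j0 i))^-1)%:MP).
have := congr1 determinant E_eq; rewrite !det_mulmx det_diag det_E det_D => det_eq.
apply: (mulIf (x := (a i (j0 i))%:MP)); first by rewrite mpolyC_eq0.
by rewrite det_eq -!mulrA -mpolyCM mulVf // mulr1 mulrC.
Qed.

Lemma defpoly_dvd_det th : (forall k, in_D a m (th k)) -> mdvd defpoly (\det (coef_mx th)).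
Proof.
by move=> th_D; apply: prod_lformX_dvd => [|i _]; [exact: index_enum_uniq | exact: lformX_dvd_det].
Qed.

Lemma saito_spans th h : (forall k, in_D a m (th k)) -> h \is a GRing.unit ->
  \det (coef_mx th) = defpoly * h -> spans_D a m th.
Proof.
move=> th_D h_unit det_eq d d_D.
have h_neq0 : h != 0 by apply: contraTneq h_unit => ->; rewrite unitr0.
have th'_D k r : in_D a m (if r == k then d else th r) by case: eqP.
have [q q_eq] := fin_all_exists (fun k => defpoly_dvd_det (th'_D k)).
have row_eq : \row_k (defpoly * q k) *m coef_mx th = (defpoly * h) *: \row_j d j.
  have -> : \row_k (defpoly * q k) = \row_j d j *m \adj (coef_mx th).
    by apply/rowP => k; rewrite [LHS]mxE -q_eq det_coef_mx_set_row.
  by rewrite -mulmxA mul_adj_mx -det_eq mul_mx_scalar.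
exists (fun k => h^-1 * q k) => j.
have := congr1 (fun A : 'rV_l => A 0 j) row_eq; rewrite !mxE /= => sum_eq.
apply: (mulfI (mulf_neq0 defpoly_neq0 h_neq0)); rewrite -sum_eq mulr_sumr.
by apply: eq_bigr => k _; rewrite !mxE -!mulrA mulVKr.
Qed.

Lemma spans_D_coef_mx th (X : 'I_l -> Defs.deriv K l) : spans_D a m th ->
  (forall r, in_D a m (X r)) -> exists G : 'M[P]_l, coef_mx X = G *m coef_mx th.
Proof.
move=> th_span X_D; have [G G_eq] := fin_all_exists (fun r => th_span _ (X_D r)).
exists (\matrix_(r, k) G r k); apply/matrixP => r j; rewrite !mxE G_eq.
by apply: eq_bigr => k _; rewrite !mxE.
Qed.

Definition defpoly_but i := \prod_(i' < n | i' != i) lf i' ^+ m i'.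

Lemma defpoly_split i : defpoly = lf i ^+ m i * defpoly_but i.
Proof. exact: bigD1. Qed.

Lemma hrestr_defpoly_but_neq0 i : hrestr i (defpoly_but i) != 0.
Proof. exact: hrestr_prod_neq0. Qed.

Lemma in_D_defpolyMl (d : Defs.deriv K l) : in_D a m (fun j => defpoly * d j).
Proof.
move=> i; exists (defpoly_but i * dapply d (a i)).
by rewrite dapplyMl (defpoly_split i) mulrA.
Qed.

(* Up to the factor [defpoly_but i], these derivations form a basis of the
   module of the single hyperplane [H_i] with multiplicity [m i]. *)
Definition local_basis i (j : 'I_l) : Defs.deriv K l := fun j' =>
  if j' == j0 i then (if j == j0 i then lf i ^+ m i else (- (a i j / a i (j0 i)))%:MP)
  else (j == j')%:R.

Lemma dapply_local_basis i j :
  dapply (local_basis i j) (a i) = if j == j0 i then lf i ^+ m i * (a i (j0 i))%:MP else 0.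
Proof.
rewrite /dapply (bigD1 (j0 i)) //= /local_basis eqxx.
have [->|ne] := eqVneq j (j0 i).
  rewrite big1 => [|j' /negbTE j'_neq]; last by rewrite j'_neq eq_sym j'_neq scaler0.
  by rewrite addr0 mulrC mul_mpolyC.
rewrite (bigD1 j) //= big1 => [|j' /andP [/negbTE j'_neq /negbTE j'_neq']]; last first.
  by rewrite j'_neq eq_sym j'_neq' scaler0.
rewrite (negbTE ne) eqxx addr0 -mul_mpolyC -mpolyCM mulrN mulrCA mulfV //.
by rewrite mulr1 mpolyCN -mul_mpolyC /= mulr1 addNr.
Qed.

Lemma in_D_local_basis i j : in_D a m (fun j' => defpoly_but i * local_basis i j j').
Proof.
move=> i'; rewrite dapplyMl.
have [->|ne] := eqVneq i' i.
  rewrite dapply_local_basis; case: eqP => _; last by exists 0; rewrite !mulr0.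
  by exists (defpoly_but i * (a i (j0 i))%:MP); rewrite mulrCA.
rewrite /defpoly_but (bigD1 i') //= -mulrA; eexists; reflexivity.
Qed.

Lemma det_local_basis i :
  \det (coef_mx (fun j j' => defpoly_but i * local_basis i j j')) =
  defpoly_but i ^+ l * lf i ^+ m i.
Proof.
have -> : coef_mx (fun j j' => defpoly_but i * local_basis i j j') =
    defpoly_but i *: \matrix_(j, j') local_basis i j j'.
  by apply/matrixP => j j'; rewrite !mxE.
rewrite detZ /local_basis det_id_col_set ?eqxx // => j lt_j.
by rewrite -(inj_eq val_inj) /= ltn_eqF // a_lt_j0 // mul0r oppr0 mpolyC0.
Qed.

Lemma hrestr_det_quotient_neq0 th h i : spans_D a m th ->
  \det (coef_mx th) = defpoly * h -> hrestr i h != 0.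
Proof.
move=> th_span det_eq.
have [G G_eq] := spans_D_coef_mx th_span (in_D_local_basis i).
have := congr1 determinant G_eq; rewrite det_mulmx det_local_basis det_eq (defpoly_split i).
move=> det_eq'; have but_eq : defpoly_but i ^+ l = \det G * defpoly_but i * h.
  by apply: (mulfI (expf_neq0 (m i) (lf_neq0 i))); rewrite mulrC det_eq'; ring.
apply/eqP => hrestr_h0; have := congr1 (hrestr i) but_eq.
rewrite rmorphXn !rmorphM /= hrestr_h0 mulr0 => /eqP.
by rewrite expf_eq0 (negbTE (hrestr_defpoly_but_neq0 i)) andbF.
Qed.

Lemma saito_det th : (forall k, in_D a m (th k)) -> spans_D a m th ->
  exists2 h, h \is a GRing.unit & \det (coef_mx th) = defpoly * h.
Proof.
move=> th_D th_span; have [h det_eq] := defpoly_dvd_det th_D.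
exists h => //.
have [G] := spans_D_coef_mx th_span (fun r => in_D_defpolyMl (fun j => (r == j)%:R)).
have -> : coef_mx (fun r j => defpoly * (r == j)%:R) = defpoly%:M.
  by apply/matrixP => r j; rewrite !mxE mulr_natr.
move=> /(congr1 determinant); rewrite det_scalar det_mulmx det_eq => det_eq'.
apply: (@unit_of_mul_eq_prod (index_enum 'I_n) (fun i => m i * l)%N h (\det G * defpoly)).
  by move=> i _; exact: hrestr_det_quotient_neq0 th_span det_eq.
have -> : h * (\det G * defpoly) = defpoly ^+ l by rewrite det_eq'; ring.
by rewrite /defpoly -prodrXl; apply: eq_bigr => i _; rewrite exprM.
Qed.

End Arrangement.

Theorem saito_criterion n (a : 'I_n -> 'I_l -> K) m th :
  distinct_hyperplanes a -> (forall k, in_D a m (th k)) ->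
  spans_D a m th /\ lin_indep th <->
  exists2 h, h \is a GRing.unit & \det (coef_mx th) = defpoly a m * h.
Proof.
move=> [a_neq0 a_nonprop] th_D.
have pivot i : exists j0, a i j0 != 0 /\ forall j : 'I_l, (j < j0)%N -> a i j = 0.
  by have [j a_j] := a_neq0 i; exact: exists_pivot a_j.
have [j0 j0_pivot] := fin_all_exists pivot.
have a_j0 i : a i (j0 i) != 0 := (j0_pivot i).1.
have a_lt_j0 i (j : 'I_l) : (j < j0 i)%N -> a i j = 0 := (j0_pivot i).2 j.
split=> [[th_span _]|[h h_unit det_eq]].
  exact: (saito_det a_j0 a_lt_j0 a_nonprop th_D th_span).
split; first exact: (saito_spans a_j0 a_lt_j0 a_nonprop th_D h_unit det_eq).
apply: lin_indep_det; rewrite det_eq mulf_neq0 ?(defpoly_neq0 m a_j0) //.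
by apply: contraTneq h_unit => ->; rewrite unitr0.
Qed.

End LinearForms.

Section IntegralForms.
Variable l : nat.
Local Notation PZ := {mpoly int[l]}.
Local Notation mapZ R := (map_mpoly (n := l) (S := R) intr).

Definition lformZ (b : 'I_l -> int) : PZ := \sum_(j < l) b j *: 'X_j.
Definition dapplyZ (d : 'I_l -> PZ) (b : 'I_l -> int) : PZ := \sum_(j < l) b j *: d j.

Lemma map_lformZ (K : fieldType) b : mapZ K (lformZ b) = lform (fun j => (b j)%:~R).
Proof. by rewrite rmorph_sum /=; apply: eq_bigr => j _; rewrite map_mpolyZ map_mpolyX. Qed.

Lemma map_dapplyZ (K : fieldType) d b :
  mapZ K (dapplyZ d b) = dapply (fun j => mapZ K (d j)) (fun j => (b j)%:~R).
Proof. by rewrite rmorph_sum /=; apply: eq_bigr => j _; rewrite map_mpolyZ. Qed.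

Lemma mapZ_rat_inj : injective (mapZ rat).
Proof.
move=> x y xy; apply/mpolyP => mo.
by apply: (@intr_inj rat); rewrite -!mcoeff_map_mpoly xy.
Qed.

Definition integral_multiple (N : nat) (q : {mpoly rat[l]}) :=
  exists z, mapZ rat z = N%:R * q.

Lemma integral_multiple_dvd N N' q : (N %| N')%N ->
  integral_multiple N q -> integral_multiple N' q.
Proof.
move=> /dvdnP [k ->] [z z_eq]; exists (k%:R * z).
by rewrite rmorphM rmorph_nat /= z_eq natrM mulrA.
Qed.

Lemma integral_multipleD N p q :
  integral_multiple N p -> integral_multiple N q -> integral_multiple N (p + q).
Proof. by move=> [y y_eq] [z z_eq]; exists (y + z); rewrite rmorphD /= y_eq z_eq mulrDr. Qed.

Lemma integral_multiple_monomial c mo : integral_multiple `|denq c| (c *: 'X_[mo]).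
Proof.
have denq_eq : (denq c)%:~R = (`|denq c|%N)%:R :> rat by rewrite -[in LHS]absz_denq.
exists (numq c *: 'X_[mo]).
by rewrite map_mpolyZ map_mpolyX /= numqE denq_eq mulrC -scalerA scaler_nat mulr_natl.
Qed.

Lemma integral_multiple_mcoeff_neq0 N q z mo :
  mapZ rat z = N%:R * q -> z@_mo != 0 -> q@_mo != 0.
Proof.
move=> z_eq; rewrite -(intr_eq0 rat) -mcoeff_map_mpoly z_eq mulr_natl mcoeffMn.
by apply: contraNneq => ->; rewrite mul0rn.
Qed.

Lemma exists_integral_multiple q : exists2 N, (0 < N)%N & integral_multiple N q.
Proof.
elim/mpolyind: q => [|c mo q _ _ [N N_gt0 q_int]].
  by exists 1%N => //; exists 0; rewrite rmorph0 mulr0.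
exists (`|denq c| * N)%N; first by rewrite muln_gt0 absz_gt0 denq_neq0.
apply: integral_multipleD.
  exact: integral_multiple_dvd (dvdn_mulr _ (dvdnn _)) (integral_multiple_monomial c mo).
exact: integral_multiple_dvd (dvdn_mull _ (dvdnn _)) q_int.
Qed.

Lemma exists_common_integral_multiple (I : finType) (F : I -> {mpoly rat[l]}) :
  exists2 N, (0 < N)%N & forall i, integral_multiple N (F i).
Proof.
have [N N_gt0 N_int] := fin_all_exists2 (fun i => exists_integral_multiple (F i)).
exists (\prod_i N i)%N => [|i]; first exact: prodn_gt0.
by apply: integral_multiple_dvd (N_int i); rewrite (bigD1 i) //= dvdn_mulr.
Qed.

Variables (n : nat) (alpha : 'I_n -> 'I_l -> int) (m : 'I_n -> nat) (e : 'I_l -> nat).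

Definition defpolyZ := \prod_(i < n) lformZ (alpha i) ^+ m i.

Lemma map_defpolyZ (K : fieldType) : mapZ K defpolyZ = defpoly (forms_in K alpha) m.
Proof. by rewrite rmorph_prod; apply: eq_bigr => i _; rewrite rmorphXn /= map_lformZ. Qed.

(* [Th] stands for [N theta] with [theta] a basis over [Q]; [h] and [u] for
   [N c] and [N / c], where [c] is the unit of Saito's criterion. *)
Definition scaled_int_basis (N : nat) (Th : 'I_l -> 'I_l -> PZ) :=
  [/\ forall k j mo, (Th k j)@_mo != 0 -> mdeg mo = e k,
      forall k i, exists q, dapplyZ (Th k) (alpha i) = lformZ (alpha i) ^+ m i * q
    & exists h u, h * u = N%:R ^+ 2 /\
        N%:R * \det (\matrix_(k, j) Th k j) = N%:R ^+ l * defpolyZ * h].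

Lemma free_of_scaled_int_basis (F : fieldType) N Th :
  distinct_hyperplanes (forms_in F alpha) -> (N%:R : F) != 0 ->
  scaled_int_basis N Th -> free_with_exponents (forms_in F alpha) m e.
Proof.
move=> dh N_neq0 [Th_hom Th_D [h [u [hu_eq det_eq]]]].
pose th k j := mapZ F (Th k j).
have th_D k : in_D (forms_in F alpha) m (th k).
  move=> i; have [q q_eq] := Th_D k i; exists (mapZ F q).
  by have := congr1 (mapZ F) q_eq; rewrite map_dapplyZ rmorphM rmorphXn /= map_lformZ.
pose c : {mpoly F[l]} := N%:R.
have c_unit : c \is a GRing.unit.
  by apply/unitrPr; exists ((N%:R : F)^-1)%:MP; rewrite /c -mpolyC_nat -mpolyCM divff.
have hF_unit : mapZ F h \is a GRing.unit.
  apply/unitrPr; exists (mapZ F u / c ^+ 2).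
  by rewrite mulrA -rmorphM hu_eq rmorphXn rmorph_nat mulrV // unitrX.
have det_th : \det (coef_mx th) = defpoly (forms_in F alpha) m * (c ^+ l / c * mapZ F h).
  have -> : coef_mx th = map_mx (mapZ F) (\matrix_(k, j) Th k j).
    by apply/matrixP => k j; rewrite !mxE.
  have := congr1 (mapZ F) det_eq.
  rewrite !rmorphM rmorphXn rmorph_nat /= map_defpolyZ => det_eq'.
  by rewrite det_map_mx -[LHS](mulKr c_unit) det_eq'; ring.
have /(saito_criterion dh th_D) [th_span th_indep] : exists2 c',
    c' \is a GRing.unit & \det (coef_mx th) = defpoly (forms_in F alpha) m * c'.
  by exists (c ^+ l / c * mapZ F h); rewrite // !unitrM unitrV c_unit hF_unit unitrX.
exists th; split => // k j mo; rewrite mcoeff_msupp mcoeff_map_mpoly => coef_neq0.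
by apply: (Th_hom k j); apply: contraNneq coef_neq0 => ->.
Qed.

Lemma scaled_int_basis_of_free :
  distinct_hyperplanes (forms_in rat alpha) ->
  free_with_exponents (forms_in rat alpha) m e ->
  exists2 N, (0 < N)%N & exists Th, scaled_int_basis N Th.
Proof.
move=> dh [th [th_D th_hom th_span th_indep]].
have [c c_unit det_eq] := (saito_criterion dh th_D).1 (conj th_span th_indep).
have [c' cc'] := unitrPr c_unit.
have [q q_eq] := fin_all_exists (fun k => fin_all_exists (th_D k)).
have [N1 N1_gt0 th_int] :=
  exists_common_integral_multiple (fun kj : 'I_l * 'I_l => th kj.1 kj.2).
have [N2 N2_gt0 q_int] :=
  exists_common_integral_multiple (fun ki : 'I_l * 'I_n => q ki.1 ki.2).
have [N3 N3_gt0 c_int] :=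
  exists_common_integral_multiple (fun b : bool => if b then c else c').
pose N := (N1 * N2 * N3)%N.
have [Th Th_eq] := fin_all_exists (fun kj =>
  integral_multiple_dvd (dvdn_mulr N3 (dvdn_mulr N2 (dvdnn N1))) (th_int kj)).
have [Q Q_eq] := fin_all_exists (fun ki =>
  integral_multiple_dvd (dvdn_mulr N3 (dvdn_mull N1 (dvdnn N2))) (q_int ki)).
have [C C_eq] := fin_all_exists (fun b =>
  integral_multiple_dvd (dvdn_mull (N1 * N2) (dvdnn N3)) (c_int b)).
exists N; first by rewrite !muln_gt0 N1_gt0 N2_gt0 N3_gt0.
exists (fun k j => Th (k, j)); split.
- move=> k j mo /(integral_multiple_mcoeff_neq0 (Th_eq (k, j))).
  by rewrite -mcoeff_msupp; apply: th_hom.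
- move=> k i; exists (Q (k, i)); apply: mapZ_rat_inj.
  rewrite map_dapplyZ rmorphM rmorphXn /= map_lformZ Q_eq /=.
  have -> : dapply (fun j => mapZ rat (Th (k, j))) (fun j => (alpha i j)%:~R) =
      dapply (fun j => N%:R * th k j) (forms_in rat alpha i).
    by apply: eq_bigr => j _; rewrite Th_eq.
  by rewrite dapplyMl q_eq mulrCA.
- exists (C true), (C false); split; apply: mapZ_rat_inj.
    by rewrite rmorphM rmorphXn rmorph_nat /= !C_eq /= mulrACA cc' mulr1 expr2.
  rewrite rmorphM [RHS]rmorphM [in RHS]rmorphM rmorphXn !rmorph_nat /=.
  rewrite map_defpolyZ C_eq /= -det_map_mx.
  have -> : map_mx (mapZ rat) (\matrix_(k, j) Th (k, j)) = N%:R *: coef_mx th.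
    by apply/matrixP => k j; rewrite !mxE Th_eq.
  by rewrite detZ det_eq mulrCA [N%:R * _]mulrCA -mulrA.
Qed.

Definition minor2 (i i' : 'I_n) (j j' : 'I_l) : int :=
  alpha i j * alpha i' j' - alpha i j' * alpha i' j.

Definition minor2_bound : nat :=
  (\max_(x : ('I_n * 'I_n) * ('I_l * 'I_l)) `|minor2 x.1.1 x.1.2 x.2.1 x.2.2|)%N.

Lemma minor2_le_bound i i' j j' : (`|minor2 i i' j j'| <= minor2_bound)%N.
Proof.
exact: (@leq_bigmax _ (fun x => `|minor2 x.1.1 x.1.2 x.2.1 x.2.2|%N) ((i, i'), (j, j'))).
Qed.

Lemma exists_minor2_neq0 (F : fieldType) : distinct_hyperplanes (forms_in F alpha) ->
  forall i i', i != i' -> exists j j', (minor2 i i' j j')%:~R != 0 :> F.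
Proof.
move=> [a_neq0 a_nonprop] i i' ne; have [j' a_j'] := a_neq0 i'.
pose c := forms_in F alpha i j' / forms_in F alpha i' j'.
have /forallPn [j /eqP a_j] :
    ~~ [forall j, forms_in F alpha i j == c * forms_in F alpha i' j].
  by apply/negP => /forallP prop; apply: (a_nonprop i i' ne c) => j; apply/eqP/prop.
exists j, j'; apply: contra_not_neq a_j => /eqP.
rewrite /minor2 rmorphB !rmorphM /= subr_eq0 => /eqP minor_eq.
by apply: (mulIf a_j'); rewrite [LHS]minor_eq mulrAC divfK.
Qed.

Lemma distinct_hyperplanes_of_minor2 (F : fieldType) :
  (forall i, exists j, (alpha i j)%:~R != 0 :> F) ->
  (forall i i', i != i' -> exists j j', (minor2 i i' j j')%:~R != 0 :> F) ->
  distinct_hyperplanes (forms_in F alpha).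
Proof.
move=> a_neq0 minor_neq0; split => // i i' ne c prop.
have [j [j' /eqP]] := minor_neq0 i i' ne; apply.
by rewrite /minor2 rmorphB !rmorphM /= -!/(forms_in _ _ _ _) !prop; ring.
Qed.

End IntegralForms.

Lemma intr_Fp_eq0 p (z : int) : prime p -> ((z%:~R : 'F_p) == 0) = (p%:Z %| z)%Z.
Proof.
move=> p_prime; have pchar_p := pchar_Fp p_prime.
by case: z => k; rewrite ?NegzE ?rmorphN ?oppr_eq0 /dvdz /= -(dvdn_pcharf pchar_p).
Qed.

Lemma intr_Fp_neq0 p (z : int) : prime p -> z != 0 -> (`|z| < p)%N -> (z%:~R : 'F_p) != 0.
Proof.
move=> p_prime z_neq0 z_lt_p; rewrite intr_Fp_eq0 // /dvdz /=.
by apply: contraTN z_lt_p => /dvdn_leq; rewrite -leqNgt absz_gt0; apply.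
Qed.

Unset Implicit Arguments.

Theorem corollary3p4 (l n : nat) (alpha : 'I_n -> 'I_l -> int)
    (m : 'I_n -> nat) (e : 'I_l -> nat) :
  distinct_hyperplanes (forms_in rat alpha) ->
  (forall (p : nat) (i : 'I_n), prime p ->
     exists j : 'I_l, ~~ (p%:Z %| alpha i j)%Z) ->
  free_with_exponents (forms_in rat alpha) m e ->
  exists N : nat, forall p : nat, prime p -> (N < p)%N ->
    free_with_exponents (forms_in 'F_p alpha) m e.
Proof.
move=> dh alpha_prim free; have [N N_gt0 [Th Th_basis]] := scaled_int_basis_of_free dh free.
exists (maxn N (minor2_bound alpha)) => p p_prime.
rewrite gtn_max => /andP [N_lt_p minor_lt_p].
apply: (free_of_scaled_int_basis _ _ Th_basis); last first.
  by apply: (@intr_Fp_neq0 p N) => //; rewrite -lt0n.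
apply: distinct_hyperplanes_of_minor2 => [i | i i' ne].
  by have [j p_ndvd] := alpha_prim p i p_prime; exists j; rewrite intr_Fp_eq0.
have [j [j' minor_neq0]] := exists_minor2_neq0 dh ne; exists j, j'.
apply: intr_Fp_neq0 => //; first by apply: contraNneq minor_neq0 => ->.
exact: leq_ltn_trans (minor2_le_bound alpha i i' j j') minor_lt_p.
Qed.
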